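(* There does not exist a $5$-qubit UPB of size $7$.
   Context: A product state in $(\mathbb{C}^2)^{\otimes p}$ is a vector $|v_1\rangle\otimes\cdots\otimes|v_p\rangle$ with each $|v_j\rangle\in\mathbb{C}^2$. A $p$-qubit unextendible product basis (UPB) is a finite set $\mathcal{S}\subseteq(\mathbb{C}^2)^{\otimes p}$ of unit product vectors that are pairwise orthogonal, such that no nonzero product vector outside $\mathcal{S}$ is orthogonal to every element of $\mathcal{S}$; its size is its number of elements. *)

(* Complex scalars: an arbitrary numClosedFieldType
   (algebraically closed field with conjugation; C is the model). *)
From HB Require Import structures.
From mathcomp Require Import all_boot all_order all_algebra.
Set Implicit Arguments. Unset Strict Implicit. Unset Printing Implicit Defensive.
Import Order.TTheory GRing.Theory Num.Theory.
Local Open Scope ring_scope.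

(* Computational basis of (C^2)^{(x)p}: bit strings x : 'I_p -> 'I_2.
   A vector of (C^2)^{(x)p} is its coordinate function. *)
Definition qvec (R : numClosedFieldType) (p : nat) :=
  {ffun {ffun 'I_p -> 'I_2} -> R}.

(* |v_1> (x) ... (x) |v_p>, with v j : C^2 given by its two coordinates *)
Definition prodvec (R : numClosedFieldType) (p : nat) (v : 'I_p -> 'I_2 -> R)
  : qvec R p := [ffun x : {ffun 'I_p -> 'I_2} => \prod_(j < p) v j (x j)].

Definition is_product (R : numClosedFieldType) (p : nat) (t : qvec R p) : Prop :=
  exists v : 'I_p -> 'I_2 -> R, t = prodvec v.

Definition inner (R : numClosedFieldType) (p : nat) (t u : qvec R p) : R :=
  \sum_x (t x)^* * u x.

(* S : seq listing the elements of the finite set (no repetitions) *)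
Definition is_UPB (R : numClosedFieldType) (p : nat) (S : seq (qvec R p)) : Prop :=
  [/\ uniq S,
      (forall s, s \in S -> is_product s /\ inner s s = 1),
      (forall s t, s \in S -> t \in S -> s != t -> inner s t = 0) &
      (forall t, is_product t -> t != 0 -> t \notin S ->
          ~ (forall s, s \in S -> inner s t = 0))].

(* Let S = {s_1, ..., s_7} be a 5-qubit UPB, s_k = u_k1 (x) ... (x) u_k5.  Since
   <s_k|s_l> is the product of the local inner products <u_kj|u_lj>, the basis is
   described by two relations at every party j: u_kj and u_lj are orthogonal, or
   parallel.  In C^2 these behave like points of a projective line paired by
   orthogonality (orth_config below), every two basis vectors are orthogonal at some
   party, and unextendibility says there is no map s : vectors -> parties whose
   fibres are parallel at their party: otherwise the product of the vectors
   orthogonal to each fibre would extend S. *)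

From HB Require Import structures.
From mathcomp Require Import all_boot all_order all_algebra.
From mathcomp Require Import ring zify.
Import Order.TTheory GRing.Theory Num.Theory.

Set Implicit Arguments. Unset Strict Implicit. Unset Printing Implicit Defensive.

Lemma pigeonhole (T U : finType) (A : {set T}) (B : {set U}) (f : T -> U) :
  {in A, forall x, f x \in B} -> #|B| < #|A| ->
  exists x y, [/\ x \in A, y \in A, x != y & f x = f y].
Proof.
move=> fAB ltBA.
have : ~~ dinjectiveb f A.
  apply/dinjectiveP => injf; move: ltBA; rewrite -(card_in_imset injf) ltnNge.
  apply/negP/negPn/subset_leq_card/subsetP => _ /imsetP [x xA ->]; exact: fAB.
case/dinjectivePn => x xA [y]; rewrite inE => /andP [nyx yA] fxy.
by exists x, y; rewrite eq_sym.
Qed.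

Lemma exists_inj_into (T U : finType) (u0 : U) (A : {set T}) (B : {set U}) :
  #|A| <= #|B| -> exists h : T -> U, {in A, forall x, h x \in B} /\ {in A &, injective h}.
Proof.
move=> le; exists (fun x => nth u0 (enum B) (index x (enum A))).
have lt x : x \in A -> index x (enum A) < size (enum B).
  by move=> xA; rewrite -cardE (leq_trans _ le) // cardE index_mem mem_enum.
split=> [x xA | x y xA yA /eqP]; first by rewrite -mem_enum mem_nth ?lt.
rewrite nth_uniq ?lt ?enum_uniq // => /eqP /(congr1 (nth x (enum A))).
by rewrite !nth_index ?mem_enum.
Qed.

Lemma card_notin (T : finType) (s : seq T) :
  uniq s -> #|[set x | x \notin s]| = #|T| - size s.
Proof.
move=> us; have -> : [set x | x \notin s] = ~: [set x in s] by apply/setP => x; rewrite !inE.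
by rewrite cardsCs setCK cardsE (card_uniqP us).
Qed.

Lemma fresh_ord n (s : seq 'I_n) : size s < n -> exists y, y \notin s.
Proof.
move=> lt; case: (pickP (fun y => y \notin s)) => [y ny | all_in]; first by exists y.
have := uniq_leq_size (enum_uniq 'I_n) (fun y _ => negbFE (all_in y)).
by rewrite size_enum_ord leqNgt lt.
Qed.

Lemma uniq_ord_size n (s : seq 'I_n) : uniq s -> size s <= n.
Proof. by move=> us; rewrite -(card_uniqP us) (leq_trans (max_card _)) ?card_ord. Qed.

Lemma uniq_ord_full n (s : seq 'I_n) x : uniq s -> size s = n -> x \in s.
Proof.
move=> us sn; apply: contraT => xs.
by have := @uniq_ord_size n (x :: s); rewrite /= xs us sn ltnn => /(_ isT).
Qed.

Lemma two_points_miss (T : eqType) (s1 s2 s3 : seq T) (x y : T) :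
  uniq (s1 ++ s2 ++ s3) ->
  has (mem [:: x; y]) s1 -> has (mem [:: x; y]) s2 -> has (mem [:: x; y]) s3 -> False.
Proof.
move=> u h1 h2 h3.
have sub : {subset filter (mem [:: x; y]) (s1 ++ s2 ++ s3) <= [:: x; y]}.
  by move=> z; rewrite mem_filter => /andP [].
have := uniq_leq_size (filter_uniq (mem [:: x; y]) u) sub.
by move: h1 h2 h3; rewrite size_filter !count_cat !has_count /=; lia.
Qed.

Record orth_config (m n : nat) (par orth : 'I_m -> 'I_n -> 'I_n -> bool) : Prop := {
  par_refl : forall j a, par j a a;
  par_sym : forall j a b, par j a b -> par j b a;
  par_trans : forall j a b c, par j a b -> par j b c -> par j a c;
  orth_sym : forall j a b, orth j a b -> orth j b a;
  orth_irrefl : forall j a, ~~ orth j a a;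
  orth_par : forall j a b c, orth j a b -> orth j a c -> par j b c;
  par_orth : forall j a b c, par j b c -> orth j a b -> orth j a c;
  orth_cover : forall a b, a != b -> exists j, orth j a b;
  no_extension : forall s : 'I_n -> 'I_m, ~ (forall a b, s a = s b -> par (s a) a b) }.

(* Bookkeeping of distinctness among finitely many named vectors: split_distinct
   breaks hypotheses uniq [:: ...] and x \notin [:: ...] into disequalities, and
   distinct proves goals of these shapes from them. *)
Ltac split_distinct := repeat match goal with
  | h : is_true (uniq (_ :: _)) |- _ => rewrite /= in h
  | h : is_true (_ \notin (_ :: _)) |- _ => rewrite inE ?negb_or in h
  | h : is_true (_ \notin [::]) |- _ => clear h
  | h : is_true (uniq [::]) |- _ => clear h
  | h : is_true (_ && _) |- _ => case/andP: h => ? ?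
  end.
Ltac distinct := rewrite /= ?inE ?negb_or ?andbT; repeat (apply/andP; split);
  solve [ assumption | rewrite eq_sym; assumption ].

Section SevenVectorsFiveParties.
Variables par orth : 'I_5 -> 'I_7 -> 'I_7 -> bool.
Hypothesis cfg : orth_config par orth.

Lemma orth_neq j a b : orth j a b -> a != b.
Proof. by apply: contraTneq => ->; exact: (orth_irrefl cfg j b). Qed.

Lemma orth_npar j a b : orth j a b -> par j a b -> False.
Proof.
move=> ab /(par_sym cfg) ba.
by have := orth_irrefl cfg j a; rewrite (par_orth cfg ba ab).
Qed.

Lemma orth_common j a b c : orth j a c -> orth j b c -> par j a b.
Proof. by move=> /(orth_sym cfg) ca /(orth_sym cfg) cb; exact: (orth_par cfg ca cb). Qed.

Lemma par_pair j p q x y : par j p q -> x \in [:: p; q] -> y \in [:: p; q] -> par j x y.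
Proof.
move=> pq; rewrite !inE => /orP [] /eqP -> /orP [] /eqP ->;
  by [exact: (par_refl cfg) | exact: pq | exact: (par_sym cfg pq)].
Qed.

(* Non-extendibility in the form used below: vectors vs assigned to parties js
   with parallel fibres, the remaining vectors cannot be spread injectively over
   the remaining parties. *)
Lemma no_partial_assignment (vs : seq 'I_7) (js : seq 'I_5) (g : 'I_7 -> 'I_5) :
  uniq vs -> uniq js -> 7 - size vs <= 5 - size js ->
  {in vs, forall a, g a \in js} -> {in vs &, forall a b, g a = g b -> par (g a) a b} ->
  False.
Proof.
move=> uvs ujs card gjs g_par.
have [h [h_out h_inj]] :=
  @exists_inj_into _ _ ord0 [set x | x \notin vs] [set x | x \notin js]
    ltac:(by rewrite !card_notin ?card_ord).
apply: (no_extension cfg (s := fun a => if a \in vs then g a else h a)) => a b.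
case: (boolP (a \in vs)) => av; case: (boolP (b \in vs)) => bv e.
- exact: (g_par a b av bv e).
- by have := h_out b; rewrite !inE bv -e (gjs a av) => /(_ isT).
- by have := h_out a; rewrite !inE av e (gjs b bv) => /(_ isT).
- by rewrite (h_inj a b) ?inE //; exact: (par_refl cfg).
Qed.

(* Three vectors are never parallel at one party (the other four vectors go to
   the other four parties). *)
Lemma no_parallel_triple j a b c : uniq [:: a; b; c] -> par j a b -> par j a c -> False.
Proof.
move=> abc ab ac.
have to_a x : x \in [:: a; b; c] -> par j a x.
  by rewrite !inE => /or3P [] /eqP ->; [exact: (par_refl cfg) | exact: ab | exact: ac].
apply: (@no_partial_assignment [:: a; b; c] [:: j] (fun=> j)) => //.
  by move=> x _; rewrite inE.
by move=> x y /to_a ax /to_a ay _; exact: (par_trans cfg (par_sym cfg ax) ay).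
Qed.

Lemma no_third_in_class j p q x z :
  par j p q -> uniq [:: p; q; z] -> x \in [:: p; q] -> par j x z -> False.
Proof.
move=> pq pqz xpq xz; apply: (no_parallel_triple pqz pq).
by apply: (par_trans cfg _ xz); apply: (par_pair pq _ xpq); rewrite inE eqxx.
Qed.

(* Parallel pairs at two different parties always meet (the other three vectors
   go to the other three parties). *)
Lemma pairs_meet j j' a b c d : j != j' -> a != b -> c != d ->
  par j a b -> par j' c d -> has (mem [:: c; d]) [:: a; b].
Proof.
move=> jj' ab cd pab pcd; apply: contraT; rewrite /= !inE orbF !negb_or.
case/andP => /andP [ac ad] /andP [bc bd]; exfalso.
have in_cd x : x \in [:: a; b] ++ [:: c; d] -> x \notin [:: a; b] -> x \in [:: c; d].
  by rewrite mem_cat => /orP [->|].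
pose g x := if x \in [:: a; b] then j else j'.
apply: (@no_partial_assignment [:: a; b; c; d] [:: j; j'] g) => //.
- by rewrite /= !inE !negb_or ab ac ad bc bd cd.
- by rewrite /= inE jj'.
- by move=> x _; rewrite /g; case: ifP; rewrite !inE eqxx ?orbT.
move=> x y xv yv; rewrite /g.
case: (boolP (x \in [:: a; b])) => xab; case: (boolP (y \in [:: a; b])) => yab e.
- exact: (par_pair pab xab yab).
- by rewrite e eqxx in jj'.
- by rewrite e eqxx in jj'.
- exact: (par_pair pcd (in_cd x xv xab) (in_cd y yv yab)).
Qed.

Lemma orth_party a : exists f : 'I_7 -> 'I_5, forall x, x != a -> orth (f x) a x.
Proof.
have /fin_all_exists [f fP] : forall x, exists j, x != a -> orth j a x.
  move=> x; case: (eqVneq x a) => [-> | xa]; first by exists ord0.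
  by rewrite eq_sym in xa; have [j ax] := orth_cover cfg xa; exists j.
by exists f.
Qed.

(* Pigeonhole on the six other vectors: every vector is orthogonal to a parallel
   pair at some party. *)
Lemma double_orth a : exists j b c, [/\ b != c, orth j a b & orth j a c].
Proof.
have [f fP] := orth_party a.
have [b [c [ba ca bc fbc]]] :=
  @pigeonhole _ _ [set~ a] [set: 'I_5] f (fun _ _ => in_setT _)
    ltac:(by rewrite cardsC1 !cardsT !card_ord).
exists (f b), b, c; rewrite {2}fbc !fP //; by rewrite -in_setC1.
Qed.

(* Every vector has an orthogonal partner at every party: otherwise the four
   vectors outside a's pair would use only three parties, giving a second parallel
   pair at another party disjoint from the first. *)
Lemma orth_everywhere a j : exists b, orth j a b.
Proof.
have [j0 [b [c [bc ab ac]]]] := double_orth a.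
have [<- | j0j] := eqVneq j0 j; first by exists b.
case: (boolP [exists b, orth j a b]) => [/existsP // | /existsPn none]; exfalso.
have [f fP] := orth_party a.
have f_out x : x \in [set x | x \notin [:: a; b; c]] -> f x \in [set i | i \notin [:: j; j0]].
  rewrite !inE !negb_or => /and3P [xa xb xc]; have ax := fP x xa.
  apply/andP; split; first by apply: contraNneq (none x) => <-.
  apply/eqP => fx; rewrite fx in ax.
  apply: (no_parallel_triple _ (orth_par cfg ab ac) (orth_par cfg ab ax)).
  by rewrite /= !inE negb_or bc ![_ == x]eq_sym xb xc.
have abc : uniq [:: a; b; c].
  by rewrite /= !inE negb_or (orth_neq ab) (orth_neq ac) bc.
have jj0 : uniq [:: j; j0] by rewrite /= inE eq_sym j0j.
have card : #|[set i | i \notin [:: j; j0]]| < #|[set x | x \notin [:: a; b; c]]|.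
  by rewrite !card_notin ?card_ord.
have [x [y [xo yo xy fxy]]] := pigeonhole f_out card.
have := f_out x xo; rewrite !inE !negb_or => /andP [_ fxj0].
move: xo yo; rewrite !inE !negb_or => /and3P [xa xb xc] /and3P [ya yb yc].
have pxy : par (f x) x y by apply: (orth_par cfg (fP x xa)); rewrite fxy fP.
have meet := pairs_meet (j' := f x) _ bc xy (orth_par cfg ab ac) pxy.
move: meet; rewrite eq_sym fxj0 => /(_ isT) /=.
by rewrite !inE !(eq_sym b) !(eq_sym c) (negbTE xb) (negbTE xc) (negbTE yb) (negbTE yc).
Qed.

(* When the pairs are
   orthogonal to each other, partners of the three remaining vectors stay among
   these three, and two of them share a partner. *)
Lemma third_pair_orth j p q r s : uniq [:: p; q; r; s] -> par j p q -> par j r s ->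
  orth j p r -> exists e1 e2, uniq [:: p; q; r; s; e1; e2] /\ par j e1 e2.
Proof.
move=> U4 pq rs pr.
have cross x y : x \in [:: p; q] -> y \in [:: r; s] -> orth j y x.
  move=> xpq yrs; have py : orth j p y := par_orth cfg (par_pair rs (mem_head _ _) yrs) pr.
  exact: (par_orth cfg (par_pair pq (mem_head _ _) xpq) (orth_sym cfg py)).
have stay x t : x \notin [:: p; q; r; s] -> orth j x t -> t \notin [:: p; q; r; s].
  move=> xo xt; apply/negP.
  rewrite -[[:: p; q; r; s]]/([:: p; q] ++ [:: r; s]) mem_cat => /orP [tpq | trs].
  - apply: (no_third_in_class rs _ (mem_head _ _)
             (orth_common (cross t r tpq (mem_head _ _)) xt)).
    by split_distinct; distinct.
  - apply: (no_third_in_class pq _ (mem_head _ _)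
             (orth_common (orth_sym cfg (cross p t (mem_head _ _) trs)) xt)).
    by split_distinct; distinct.
have [w wo] := @fresh_ord 7 [:: p; q; r; s] isT.
have [v wv] := orth_everywhere w j.
have vo := stay w v wo wv.
have [u uo] := @fresh_ord 7 [:: p; q; r; s; w; v] isT.
have uo4 : u \notin [:: p; q; r; s].
  apply: contra uo => uo4.
  by rewrite -[[:: p; q; r; s; w; v]]/([:: p; q; r; s] ++ [:: w; v]) mem_cat uo4.
have [t ut] := orth_everywhere u j.
have t_out := stay u t uo4 ut.
have wvne := orth_neq wv; have utne := orth_neq ut.
split_distinct.
have [tw | tw] := eqVneq t w.
  exists u, v; split; first by distinct.
  by rewrite tw in ut; exact: (orth_common ut (orth_sym cfg wv)).
have [tv | tv] := eqVneq t v.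
  exists u, w; split; first by distinct.
  by rewrite tv in ut; exact: (orth_common ut wv).
have : uniq [:: t; p; q; r; s; w; v; u] by distinct.
by move/uniq_ord_size.
Qed.

(* Otherwise the partners w1, w2 of the two pairs are two new vectors, and the
   partner of the seventh vector u makes u parallel to w1 or to w2. *)
Lemma third_pair_nonorth j p q r s : uniq [:: p; q; r; s] -> par j p q -> par j r s ->
  ~~ orth j p r -> exists e1 e2, uniq [:: p; q; r; s; e1; e2] /\ par j e1 e2.
Proof.
move=> U4 pq rs npr.
have [w1 pw1] := orth_everywhere p j; have [w2 rw2] := orth_everywhere r j.
have w1o : w1 \notin [:: p; q; r; s].
  apply/negP; rewrite !inE => /or4P [] /eqP w1E; rewrite w1E in pw1.
  - by move: (orth_neq pw1); rewrite eqxx.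
  - exact: orth_npar pw1 pq.
  - by rewrite pw1 in npr.
  - by rewrite (par_orth cfg (par_sym cfg rs) pw1) in npr.
have w2o : w2 \notin [:: p; q; r; s].
  apply/negP; rewrite !inE => /or4P [] /eqP w2E; rewrite w2E in rw2.
  - by rewrite (orth_sym cfg rw2) in npr.
  - by rewrite (orth_sym cfg (par_orth cfg (par_sym cfg pq) rw2)) in npr.
  - by move: (orth_neq rw2); rewrite eqxx.
  - exact: orth_npar rw2 rs.
have w12 : w1 != w2.
  apply/eqP => w12; rewrite -w12 in rw2.
  apply: (no_third_in_class pq _ (mem_head _ _) (orth_common pw1 rw2)).
  by split_distinct; distinct.
have [u uo] := @fresh_ord 7 [:: p; q; r; s; w1; w2] isT.
have [t ut] := orth_everywhere u j; have utne := orth_neq ut.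
case tin: (t \in [:: p; q] ++ [:: r; s] ++ [:: w1; w2]); last first.
  have : uniq [:: t; p; q; r; s; w1; w2; u].
    by move/negbT: tin; rewrite /= => tin; split_distinct; distinct.
  by move/uniq_ord_size.
move: tin; rewrite !mem_cat => /or3P [tpq | trs | tw].
- exists u, w1; split; first by split_distinct; distinct.
  have up := par_orth cfg (par_pair pq tpq (mem_head _ _)) ut.
  exact: (orth_common up (orth_sym cfg pw1)).
- exists u, w2; split; first by split_distinct; distinct.
  have ur := par_orth cfg (par_pair rs trs (mem_head _ _)) ut.
  exact: (orth_common ur (orth_sym cfg rw2)).
- exfalso; move: tw; rewrite !inE => /orP [] /eqP tE; rewrite tE in ut.
  + apply: (no_third_in_class pq _ (mem_head _ _) (orth_common pw1 ut)).
    by split_distinct; distinct.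
  + apply: (no_third_in_class rs _ (mem_head _ _) (orth_common rw2 ut)).
    by split_distinct; distinct.
Qed.

(* Three disjoint parallel pairs at j leave a seventh vector z parallel to nothing;
   the vectors orthogonal to z's partner v at j are then only z, so the parallel
   pair orthogonal to v lives at another party and would have to meet all three
   pairs. *)
Lemma no_disjoint_pairs j p q r s : uniq [:: p; q; r; s] -> par j p q -> par j r s -> False.
Proof.
move=> U4 pq rs.
have [e1 [e2 [U6 e12]]] : exists e1 e2, uniq [:: p; q; r; s; e1; e2] /\ par j e1 e2.
  by case: (boolP (orth j p r)); [exact: third_pair_orth | exact: third_pair_nonorth].
have [z zo] := @fresh_ord 7 [:: p; q; r; s; e1; e2] isT.
have U7 : uniq [:: p; q; r; s; e1; e2; z].
  by have := rcons_uniq [:: p; q; r; s; e1; e2] z; rewrite zo U6.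
have lonely y : par j y z -> y = z.
  move=> yz; have := uniq_ord_full y U7 erefl.
  rewrite -[[:: p; q; r; s; e1; e2; z]]/([:: p; q] ++ [:: r; s] ++ [:: e1; e2] ++ [:: z]).
  rewrite !mem_cat => /or4P [ypq | yrs | ye | /[1!inE] /eqP //]; exfalso.
  - by apply: (no_third_in_class pq _ ypq yz); split_distinct; distinct.
  - by apply: (no_third_in_class rs _ yrs yz); split_distinct; distinct.
  - by apply: (no_third_in_class e12 _ ye yz); split_distinct; distinct.
have [v zv] := orth_everywhere z j.
have [j0 [x [y [xy vx vy]]]] := double_orth v.
have [j0j | jj0] := eqVneq j0 j.
  rewrite j0j in vx vy; move: xy.
  rewrite (lonely x (orth_common (orth_sym cfg vx) zv)).
  by rewrite (lonely y (orth_common (orth_sym cfg vy) zv)) eqxx.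
have pxy := orth_par cfg vx vy; rewrite eq_sym in jj0.
apply: (@two_points_miss _ [:: p; q] [:: r; s] [:: e1; e2] x y U6).
- by apply: (pairs_meet jj0 _ xy pq pxy); split_distinct; distinct.
- by apply: (pairs_meet jj0 _ xy rs pxy); split_distinct; distinct.
- by apply: (pairs_meet jj0 _ xy e12 pxy); split_distinct; distinct.
Qed.

(* Two vectors orthogonal to parallel pairs at the same party yield two disjoint
   parallel pairs there: {a, a'} and {b, c} if a, a' are parallel, and {b, c},
   {b', c'} otherwise. *)
Lemma shared_double_orth j a a' b c b' c' : a != a' ->
  b != c -> orth j a b -> orth j a c -> b' != c' -> orth j a' b' -> orth j a' c' -> False.
Proof.
move=> aa' bc ab ac bc' ab' ac'.
have pbc := orth_par cfg ab ac.
case: (boolP (par j a a')) => [paa' | npaa'].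
  apply: (no_disjoint_pairs _ paa' pbc).
  have a'b : a' != b by apply: contraTneq paa' => ->; apply/negP; exact: orth_npar ab.
  have a'c : a' != c by apply: contraTneq paa' => ->; apply/negP; exact: orth_npar ac.
  by rewrite /= !inE !negb_or aa' (orth_neq ab) (orth_neq ac) a'b a'c bc.
have apart x y : orth j a x -> orth j a' y -> x != y.
  by move=> ax a'y; apply: contraNneq npaa' => xy; rewrite xy in ax; exact: orth_common ax a'y.
apply: (no_disjoint_pairs _ pbc (orth_par cfg ab' ac')).
by rewrite /= !inE !negb_or bc bc' !apart.
Qed.

(* Seven vectors, five parties: two vectors share the party of double_orth. *)
Lemma no_orth_config : False.
Proof.
have /fin_all_exists [g gP] := double_orth.
have [a [a' [_ _ aa' gaa']]] :=
  @pigeonhole _ _ [set: 'I_7] [set: 'I_5] g (fun _ _ => in_setT _)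
    ltac:(by rewrite !cardsT !card_ord).
have [b [c [bc ab ac]]] := gP a; have [b' [c' [bc' ab' ac']]] := gP a'.
rewrite -gaa' in ab' ac'.
exact: shared_double_orth aa' bc ab ac bc' ab' ac'.
Qed.
End SevenVectorsFiveParties.

Local Open Scope ring_scope.

Section QubitGeometry.
Variable R : numClosedFieldType.
Implicit Types a b c : 'I_2 -> R.

Definition i0 : 'I_2 := ord0.
Definition i1 : 'I_2 := ord_max.

Definition dot2 a b : R := \sum_i (a i)^* * b i.

Definition par2 a b : bool := a i0 * b i1 == a i1 * b i0.

Lemma dot2E a b : dot2 a b = (a i0)^* * b i0 + (a i1)^* * b i1.
Proof. by rewrite /dot2 big_ord_recr big_ord1 (_ : widen_ord _ _ = i0) //; exact: val_inj. Qed.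

Lemma inner_prodvec p (u w : 'I_p -> 'I_2 -> R) :
  inner (prodvec u) (prodvec w) = \prod_j dot2 (u j) (w j).
Proof.
rewrite /inner /dot2 bigA_distr_bigA /=; apply: eq_bigr => x _.
by rewrite !ffunE rmorph_prod -big_split.
Qed.

Lemma dot2C a b : dot2 b a = (dot2 a b)^*.
Proof. by rewrite !dot2E rmorphD !rmorphM /= !conjCK [_ * a i0]mulrC [_ * a i1]mulrC. Qed.

Lemma dot2_nz_entry a : dot2 a a != 0 -> (a i0 != 0) || (a i1 != 0).
Proof.
apply: contraR; rewrite negb_or !negbK => /andP [/eqP a0 /eqP a1].
by rewrite dot2E a0 a1 !mulr0 addr0.
Qed.

Lemma nz_coord_eq0 a (x : R) :
  dot2 a a != 0 -> (a i0 == 0) || (x == 0) -> (a i1 == 0) || (x == 0) -> x = 0.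
Proof.
move=> /dot2_nz_entry /orP [a0 | a1] /orP [h0 | /eqP //] /orP [h1 | /eqP //].
- by rewrite h0 in a0.
- by rewrite h1 in a1.
Qed.

Lemma orth2_par a b c : dot2 a a != 0 -> dot2 a b = 0 -> dot2 a c = 0 -> par2 b c.
Proof.
move=> na ab ac; apply/eqP/subr0_eq; set D := _ - _.
have e0 : (a i0)^* * D = c i1 * dot2 a b - b i1 * dot2 a c by rewrite !dot2E /D; ring.
have e1 : (a i1)^* * D = b i0 * dot2 a c - c i0 * dot2 a b by rewrite !dot2E /D; ring.
apply: (nz_coord_eq0 na).
- by move/eqP: e0; rewrite ab ac !mulr0 subr0 mulf_eq0 conjC_eq0.
- by move/eqP: e1; rewrite ab ac !mulr0 subr0 mulf_eq0 conjC_eq0.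
Qed.

Lemma par2_orth a b c : dot2 b b != 0 -> par2 b c -> dot2 a b = 0 -> dot2 a c = 0.
Proof.
move=> nb /eqP bc ab.
have e0 : b i0 * dot2 a c = c i0 * dot2 a b + (a i1)^* * (b i0 * c i1 - b i1 * c i0).
  by rewrite !dot2E; ring.
have e1 : b i1 * dot2 a c = c i1 * dot2 a b - (a i0)^* * (b i0 * c i1 - b i1 * c i0).
  by rewrite !dot2E; ring.
apply: (nz_coord_eq0 nb).
- by move/eqP: e0; rewrite ab bc subrr !mulr0 addr0 mulf_eq0.
- by move/eqP: e1; rewrite ab bc subrr !mulr0 subr0 mulf_eq0.
Qed.

Lemma par2_refl a : par2 a a.
Proof. by rewrite /par2 mulrC. Qed.

Lemma par2_sym a b : par2 a b -> par2 b a.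
Proof. by move=> /eqP e; apply/eqP; rewrite mulrC [b i1 * _]mulrC e. Qed.

Lemma par2_trans a b c : dot2 b b != 0 -> par2 a b -> par2 b c -> par2 a c.
Proof.
move=> nb /eqP ab /eqP bc; apply/eqP/subr0_eq; set X := _ - _.
have e0 : b i0 * X = c i0 * (a i0 * b i1 - a i1 * b i0) + a i0 * (b i0 * c i1 - b i1 * c i0).
  by rewrite /X; ring.
have e1 : b i1 * X = a i1 * (b i0 * c i1 - b i1 * c i0) + c i1 * (a i0 * b i1 - a i1 * b i0).
  by rewrite /X; ring.
apply: (nz_coord_eq0 nb).
- by move/eqP: e0; rewrite ab bc !subrr !mulr0 addr0 mulf_eq0.
- by move/eqP: e1; rewrite ab bc !subrr !mulr0 addr0 mulf_eq0.
Qed.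

Definition perp2 a : 'I_2 -> R := fun i => if i == i0 then (a i1)^* else - (a i0)^*.

Lemma dot2_perp a b : par2 b a -> dot2 b (perp2 a) = 0.
Proof.
move=> /eqP ba; rewrite dot2E /perp2 eqxx /=.
have -> : (b i0)^* * (a i1)^* + (b i1)^* * - (a i0)^* = (b i0 * a i1 - b i1 * a i0)^*.
  by rewrite rmorphB !rmorphM /=; ring.
by rewrite ba subrr rmorph0.
Qed.

Lemma dot2_perp_perp a : dot2 (perp2 a) (perp2 a) = dot2 a a.
Proof. by rewrite !dot2E /perp2 eqxx /= raddfN /= !conjCK; ring. Qed.
End QubitGeometry.

Section LocalConfiguration.
Variables (R : numClosedFieldType) (n p : nat) (u : 'I_n -> 'I_p -> 'I_2 -> R).
Hypothesis u_nz : forall k j, dot2 (u k j) (u k j) != 0.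

Definition loc_par (j : 'I_p) (k k' : 'I_n) : bool := par2 (u k j) (u k' j).
Definition loc_orth (j : 'I_p) (k k' : 'I_n) : bool := dot2 (u k j) (u k' j) == 0.

(* An assignment with parallel fibres yields a nonzero product vector orthogonal to
   all prodvec (u k): at party j use perp2 of a vector of the fibre of j. *)
Lemma orth_product_of_assignment (s : 'I_n -> 'I_p) :
  (forall k k', s k = s k' -> loc_par (s k) k k') ->
  exists w : 'I_p -> 'I_2 -> R,
    inner (prodvec w) (prodvec w) != 0 /\ forall k, inner (prodvec (u k)) (prodvec w) = 0.
Proof.
move=> s_par; pose e0 : 'I_2 -> R := fun i => (i == i0)%:R.
exists (fun j => if [pick k | s k == j] is Some k then perp2 (u k j) else e0); split.
  rewrite inner_prodvec; apply/prodf_neq0 => j _; case: pickP => [k _|_].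
    by rewrite dot2_perp_perp.
  by rewrite dot2E /e0 eqxx /= mulr0 addr0 rmorph1 mulr1 oner_neq0.
move=> k; rewrite inner_prodvec (bigD1 (s k)) //=; case: pickP => [k' /eqP sk' | none].
  by rewrite dot2_perp ?mul0r //; exact: s_par (esym sk').
by have := none k; rewrite eqxx.
Qed.

Lemma local_orth_config :
  (forall k k', k != k' -> exists j, loc_orth j k k') ->
  (forall s : 'I_n -> 'I_p, ~ (forall k k', s k = s k' -> loc_par (s k) k k')) ->
  orth_config loc_par loc_orth.
Proof.
move=> cover noext; split; rewrite /loc_par /loc_orth //.
- by move=> j k; exact: par2_refl.
- by move=> j k k'; exact: par2_sym.
- by move=> j a b c; exact: par2_trans (u_nz b j).
- by move=> j a b /eqP ab; apply/eqP; rewrite dot2C ab rmorph0.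
- by move=> j a b c /eqP ab /eqP ac; exact: orth2_par (u_nz a j) ab ac.
- by move=> j a b c bc /eqP ab; apply/eqP; exact: par2_orth (u_nz b j) bc ab.
Qed.
End LocalConfiguration.

Lemma upb_orth_config (R : numClosedFieldType) (p n : nat) (S : seq (qvec R p)) :
  is_UPB S -> size S = n ->
  exists u : 'I_n -> 'I_p -> 'I_2 -> R, orth_config (loc_par u) (loc_orth u).
Proof.
case=> uniqS prodS orthS unext sizeS.
have memS (k : 'I_n) : nth 0 S k \in S by rewrite mem_nth ?sizeS.
have /fin_all_exists [u Su] :
    forall k : 'I_n, exists v : 'I_p -> 'I_2 -> R, nth 0 S k = prodvec v.
  by move=> k; have [[v ->] _] := prodS _ (memS k); exists v.
have u_nz (k : 'I_n) (j : 'I_p) : dot2 (u k j) (u k j) != 0.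
  have := (prodS _ (memS k)).2; rewrite Su inner_prodvec => norm1.
  by have /prodf_neq0/(_ j isT) : \prod_j dot2 (u k j) (u k j) != 0 by rewrite norm1 oner_neq0.
exists u; apply: local_orth_config => // [k k' nkk' | asg asg_par].
  have := orthS _ _ (memS k) (memS k'); rewrite !Su inner_prodvec -!Su nth_uniq ?sizeS //.
  by move=> /(_ nkk') /eqP /prodf_eq0 [j _ /eqP j0]; exists j; apply/eqP.
(* an assignment with parallel fibres gives a product vector extending S *)
have [w [w_nz w_orth]] := orth_product_of_assignment u_nz asg_par.
have w_orthS s : s \in S -> inner s (prodvec w) = 0.
  move=> sS; have ltsn : (index s S < n)%N by rewrite -sizeS index_mem.
  by rewrite -(nth_index 0 sS) -[index s S]/(nat_of_ord (Ordinal ltsn)) Su w_orth.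
have w_neq0 : prodvec w != 0.
  by apply: contra w_nz => /eqP ->; rewrite /inner big1 // => x _; rewrite ffunE mulr0.
have wS : prodvec w \notin S by apply: contra w_nz => /w_orthS ->.
exact: unext (ex_intro _ w erefl) w_neq0 wS w_orthS.
Qed.

Theorem mainTheorem11 (R : numClosedFieldType) (S : seq (qvec R 5)) :
  is_UPB S -> size S <> 7%N.
Proof.
move=> upb size7; have [u cfg] := upb_orth_config upb size7.
exact: no_orth_config cfg.
Qed.
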